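(* Let $A\in\mathbb{R}^{3\times 3}$ be an upper triangular $Z$-matrix whose diagonal entries are all nonnegative. If $A$ is a Karamardian matrix, then $A$ is range monotone.
   Context: A $Z$-matrix is a real square matrix whose off-diagonal entries are nonpositive. A square matrix $M$ is range monotone if $Mx\ge 0$ and $x\in R(M)$ imply $x\ge 0$. For $A\in\mathbb{R}^{n\times n}$ let $K_A=\mathbb{R}^n_+\cap R(A)$ and $K_A^*=\{y\in\mathbb{R}^n: x^Ty\ge 0 \text{ for all } x\in K_A\}$ (one has $K_A^*=\mathbb{R}^n_++N(A^T)$, and its interior is $\{a+b: a>0,\ b\in N(A^T)\}$). For $q\in\mathbb{R}^n$, LCP$(A,K_A,q)$ is to find $x$ with $x\in K_A$, $Ax+q\in K_A^*$, $x^T(Ax+q)=0$. $A$ is a Karamardian matrix if $K_A\ne\{0\}$ and there exists $d$ in the interior of $K_A^*$ such that both LCP$(A,K_A,0)$ and LCP$(A,K_A,d)$ have $x=0$ as their only solution. *)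

From HB Require Import structures.
From mathcomp Require Import all_boot all_order all_algebra.
From mathcomp Require Import reals.
Set Implicit Arguments. Unset Strict Implicit. Unset Printing Implicit Defensive.
Import Order.TTheory GRing.Theory Num.Theory.
Local Open Scope ring_scope.

Section Defs.
Variable R : realType.
Variable n : nat.

Definition vnonneg (x : 'cV[R]_n) : Prop := forall i, 0 <= x i 0.
Definition vpos (x : 'cV[R]_n) : Prop := forall i, 0 < x i 0.

Definition Zmatrix (A : 'M[R]_n) : Prop := forall i j, i != j -> A i j <= 0.

Definition in_range (M : 'M[R]_n) (x : 'cV[R]_n) : Prop := exists y, x = M *m y.
Definition in_null (M : 'M[R]_n) (x : 'cV[R]_n) : Prop := M *m x = 0.

Definition range_monotone (M : 'M[R]_n) : Prop :=
  forall x : 'cV[R]_n, vnonneg (M *m x) -> in_range M x -> vnonneg x.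

Definition KA (A : 'M[R]_n) (x : 'cV[R]_n) : Prop := vnonneg x /\ in_range A x.

Definition KA_dual (A : 'M[R]_n) (y : 'cV[R]_n) : Prop :=
  forall x, KA A x -> 0 <= (x^T *m y) 0 0.

(* interior of K_A^*, as given in the paper: { a + b : a > 0, b in N(A^T) } *)
Definition KA_dual_int (A : 'M[R]_n) (y : 'cV[R]_n) : Prop :=
  exists a b, vpos a /\ in_null A^T b /\ y = a + b.

Definition LCP_sol (A : 'M[R]_n) (q x : 'cV[R]_n) : Prop :=
  [/\ KA A x, KA_dual A (A *m x + q) & (x^T *m (A *m x + q)) 0 0 = 0].

Definition Karamardian (A : 'M[R]_n) : Prop :=
  (exists x, KA A x /\ x <> 0) /\
  exists d, [/\ KA_dual_int A d,
               (forall x, LCP_sol A 0 x -> x = 0) &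
               (forall x, LCP_sol A d x -> x = 0)].

End Defs.

From HB Require Import structures.
From mathcomp Require Import all_boot all_order all_algebra.
From mathcomp Require Import reals.
From mathcomp Require Import ring lra.
Import Order.TTheory GRing.Theory Num.Theory.
Set Implicit Arguments. Unset Strict Implicit. Unset Printing Implicit Defensive.
Local Open Scope ring_scope.

(* The Karamardian property is used only through LCP(A, K_A, 0): any
   nonnegative z in R(A) with A z = 0 solves it, so R(A) /\ N(A) contains no
   nonzero nonnegative vector (karamardian_range_kernel).

   Write A = [[a, p, q], [0, b, r], [0, 0, c]] and z = A y with A z >= 0.
   Going up the rows, a positive diagonal entry gives z_i >= 0 at once, since
   the later coordinates are already nonnegative and the off-diagonal entries
   are nonpositive.  A zero diagonal entry forces z_i = 0; this uses the
   kernel property on explicit vectors of the range to obtain relations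
   between the entries (zero_diag01, zero_diag02, zero_diag12, zero_diag012). *)

Lemma pos_diag_row (R : realDomainType) (d w s : R) :
  0 < d -> s <= 0 -> 0 <= d * w + s -> 0 <= w.
Proof. by move=> d_gt0 s_le0 row_ge0; rewrite -(pmulr_rge0 _ d_gt0); lra. Qed.

Section UpperTriangular3.
Variable R : realFieldType.
Variables a p q b r c : R.
Hypotheses (a_ge0 : 0 <= a) (b_ge0 : 0 <= b) (c_ge0 : 0 <= c).
Hypotheses (p_le0 : p <= 0) (q_le0 : q <= 0) (r_le0 : r <= 0).

Definition row0 (y0 y1 y2 : R) : R := a * y0 + p * y1 + q * y2.
Definition row1 (y1 y2 : R) : R := b * y1 + r * y2.
Definition row2 (y2 : R) : R := c * y2.

Hypothesis range_kernel_cone : forall y0 y1 y2 z0 z1 z2 : R,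
  z0 = row0 y0 y1 y2 -> z1 = row1 y1 y2 -> z2 = row2 y2 ->
  0 <= z0 -> 0 <= z1 -> 0 <= z2 ->
  row0 z0 z1 z2 = 0 -> row1 z1 z2 = 0 -> row2 z2 = 0 ->
  [/\ z0 = 0, z1 = 0 & z2 = 0].

Lemma range_kernel_nonpos y0 y1 y2 z0 z1 z2 :
  z0 = row0 y0 y1 y2 -> z1 = row1 y1 y2 -> z2 = row2 y2 ->
  z0 <= 0 -> z1 <= 0 -> z2 <= 0 ->
  row0 z0 z1 z2 = 0 -> row1 z1 z2 = 0 -> row2 z2 = 0 ->
  [/\ z0 = 0, z1 = 0 & z2 = 0].
Proof.
move=> -> -> -> z0_le0 z1_le0 z2_le0 e0 e1 e2.
have [] := @range_kernel_cone (- y0) (- y1) (- y2)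
  (- row0 y0 y1 y2) (- row1 y1 y2) (- row2 y2).
all: rewrite /row0 /row1 /row2 in z0_le0 z1_le0 z2_le0 e0 e1 e2 *; try lra.
by move=> ? ? ?; split; lra.
Qed.

(* If a = 0 then the first unit vector lies in the kernel, so no nonzero
   multiple of it lies in the range. *)
Lemma first_axis_not_in_range y0 y1 y2 :
  a = 0 -> row1 y1 y2 = 0 -> row2 y2 = 0 -> row0 y0 y1 y2 = 0.
Proof.
move=> a0 /esym z1_0 /esym z2_0.
have [row0_0 row1_0 row2_0] :
    [/\ row0 (row0 y0 y1 y2) 0 0 = 0, row1 0 0 = 0 & row2 0 = 0].
  by rewrite /row0 /row1 /row2 a0; split; ring.
have [z0_ge0|/ltW z0_le0] := lerP 0 (row0 y0 y1 y2).
  by have [] := range_kernel_cone erefl z1_0 z2_0 z0_ge0 (lexx 0) (lexx 0)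
    row0_0 row1_0 row2_0.
by have [] := range_kernel_nonpos erefl z1_0 z2_0 z0_le0 (lexx 0) (lexx 0)
  row0_0 row1_0 row2_0.
Qed.

Lemma zero_diag01 : a = 0 -> b = 0 -> p = 0.
Proof.
move=> a0 b0; have := @first_axis_not_in_range 0 1 0 a0.
by rewrite /row0 /row1 /row2 b0 !(mulr0, mul0r, mulr1, addr0, add0r); apply.
Qed.

Lemma zero_diag02 : a = 0 -> c = 0 -> b * q = p * r.
Proof.
move=> a0 c0; have e : row0 0 (- r) b = 0.
  by apply: first_axis_not_in_range; rewrite // /row1 /row2 ?c0; ring.
by apply/eqP; rewrite -subr_eq0 -e /row0 a0; apply/eqP; ring.
Qed.

(* Witness: z = (p r / a, -r, 0) if a > 0, and z = (-q, -r, 0) if a = 0. *)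
Lemma zero_diag12 : b = 0 -> c = 0 -> r = 0.
Proof.
move=> b0 c0; have [a0|a_neq0] := eqVneq a 0.
  have p0 := zero_diag01 a0 b0.
  have [] := @range_kernel_cone 0 0 (-1) (- q) (- r) 0.
  all: rewrite /row0 /row1 /row2 ?a0 ?b0 ?c0 ?p0 ?oppr_ge0 //; try ring.
  by move=> _ /eqP; rewrite oppr_eq0 => /eqP.
have [] := @range_kernel_cone ((q + p * r / a) / a) 0 (-1) (p * r / a) (- r) 0.
all: rewrite /row0 /row1 /row2 ?b0 ?c0 ?oppr_ge0 //; try ring.
- by field.
- by rewrite divr_ge0 ?mulr_le0.
- by field.
by move=> _ /eqP; rewrite oppr_eq0 => /eqP.
Qed.

Lemma zero_diag012 : a = 0 -> b = 0 -> c = 0 -> q = 0.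
Proof.
move=> a0 b0 c0; have r0 := zero_diag12 b0 c0.
have := @first_axis_not_in_range 0 0 1 a0.
by rewrite /row0 /row1 /row2 c0 r0 !(mulr0, mul0r, mulr1, addr0, add0r); apply.
Qed.

Lemma row2_nonneg y2 : 0 <= row2 (row2 y2) -> 0 <= row2 y2.
Proof.
rewrite /row2 => cz2_ge0; have [c0|c_neq0] := eqVneq c 0; first by rewrite c0 mul0r.
by apply: (@pos_diag_row _ c _ 0); rewrite ?addr0 // lt_def c_neq0.
Qed.

Lemma zero_diag_row1 y1 y2 : b = 0 ->
  0 <= row2 y2 -> 0 <= row1 (row1 y1 y2) (row2 y2) -> row1 y1 y2 = 0.
Proof.
rewrite /row1 /row2 => b0 z2_ge0; rewrite b0 !mul0r !add0r => rz2_ge0.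
have rz2_0 : r * (c * y2) = 0 by apply/eqP; rewrite eq_le rz2_ge0 mulr_le0_ge0.
have [c0|c_neq0] := eqVneq c 0; first by rewrite (zero_diag12 b0 c0) mul0r.
by move/eqP: rz2_0; rewrite mulrCA mulf_eq0 (negbTE c_neq0) => /eqP.
Qed.

Lemma row1_nonneg y1 y2 :
  0 <= row2 y2 -> 0 <= row1 (row1 y1 y2) (row2 y2) -> 0 <= row1 y1 y2.
Proof.
move=> z2_ge0 Az1_ge0; have [b0|b_neq0] := eqVneq b 0.
  by rewrite (zero_diag_row1 b0 z2_ge0 Az1_ge0).
apply: (pos_diag_row _ _ Az1_ge0); first by rewrite lt_def b_neq0.
by rewrite mulr_le0_ge0.
Qed.

(* With a = 0, the first row of A z >= 0 reads p z1 + q z2 >= 0, so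
   p z1 = q z2 = 0; together with the relations between the entries this
   gives z0 = 0 for every pattern of b and c. *)
Lemma zero_diag_row0 y0 y1 y2 : a = 0 ->
  0 <= row1 y1 y2 -> 0 <= row2 y2 -> 0 <= row1 (row1 y1 y2) (row2 y2) ->
  0 <= row0 (row0 y0 y1 y2) (row1 y1 y2) (row2 y2) -> row0 y0 y1 y2 = 0.
Proof.
move=> a0; set z1 := row1 y1 y2; set z2 := row2 y2 => z1_ge0 z2_ge0 Az1_ge0.
rewrite {1}/row0 a0 mul0r add0r => Az0_ge0.
have pz1_le0 : p * z1 <= 0 by rewrite mulr_le0_ge0.
have qz2_le0 : q * z2 <= 0 by rewrite mulr_le0_ge0.
have pz1_0 : p * z1 = 0 by lra.
have qz2_0 : q * z2 = 0 by lra.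
have [b0|b_neq0] := eqVneq b 0.
  have p0 := zero_diag01 a0 b0.
  have [c0|c_neq0] := eqVneq c 0.
    by rewrite /row0 a0 p0 (zero_diag012 a0 b0 c0); ring.
  apply: (mulfI c_neq0); rewrite mulr0 -qz2_0 /row0 /z2 /row2 a0 p0; ring.
have b_row0 : b * row0 y0 y1 y2 = p * z1 + (b * q - p * r) * y2.
  by rewrite /row0 /z1 /row1 a0; ring.
have [c0|c_neq0] := eqVneq c 0.
  by apply: (mulfI b_neq0); rewrite b_row0 pz1_0 (zero_diag02 a0 c0) subrr; ring.
have prz2_0 : p * r * z2 = 0.
  have prz2_ge0 : 0 <= p * r * z2 by rewrite mulr_ge0 // mulr_le0.
  have : p * row1 z1 z2 <= 0 by rewrite mulr_le0_ge0.
  have -> : p * row1 z1 z2 = b * (p * z1) + p * r * z2 by rewrite /row1; ring.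
  by rewrite pz1_0 mulr0 add0r; lra.
apply: (mulfI (mulf_neq0 b_neq0 c_neq0)).
have -> : b * c * row0 y0 y1 y2 = c * (p * z1) + b * (q * z2) - p * r * z2.
  by rewrite /row0 /z1 /z2 /row1 /row2 a0; ring.
by rewrite pz1_0 qz2_0 prz2_0; ring.
Qed.

Lemma row0_nonneg y0 y1 y2 :
  0 <= row1 y1 y2 -> 0 <= row2 y2 -> 0 <= row1 (row1 y1 y2) (row2 y2) ->
  0 <= row0 (row0 y0 y1 y2) (row1 y1 y2) (row2 y2) -> 0 <= row0 y0 y1 y2.
Proof.
move=> z1_ge0 z2_ge0 Az1_ge0 Az0_ge0; have [a0|a_neq0] := eqVneq a 0.
  by rewrite (zero_diag_row0 a0 z1_ge0 z2_ge0 Az1_ge0 Az0_ge0).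
rewrite {1}/row0 -addrA in Az0_ge0.
apply: (pos_diag_row _ _ Az0_ge0); first by rewrite lt_def a_neq0.
by rewrite -[0]addr0 lerD // mulr_le0_ge0.
Qed.

Lemma upper_triangular3_range_monotone y0 y1 y2 :
  0 <= row0 (row0 y0 y1 y2) (row1 y1 y2) (row2 y2) ->
  0 <= row1 (row1 y1 y2) (row2 y2) -> 0 <= row2 (row2 y2) ->
  [/\ 0 <= row0 y0 y1 y2, 0 <= row1 y1 y2 & 0 <= row2 y2].
Proof.
move=> Az0_ge0 Az1_ge0 /row2_nonneg z2_ge0.
have z1_ge0 := row1_nonneg z2_ge0 Az1_ge0.
by split=> //; apply: row0_nonneg.
Qed.

End UpperTriangular3.

(* In any dimension, if z is a nonnegative vector of the range with A z = 0,
   then z solves LCP(A, K_A, 0); a Karamardian matrix thus admits no such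
   nonzero z. *)
Lemma karamardian_range_kernel (R : realType) (n : nat) (A : 'M[R]_n) :
  Karamardian A ->
  forall z, in_range A z -> vnonneg z -> A *m z = 0 -> z = 0.
Proof.
move=> [_ [d [_ lcp0_trivial _]]] z z_range z_ge0 Az0.
have Az_q0 : A *m z + 0 = 0 by rewrite Az0 addr0.
apply: lcp0_trivial; split; first by [].
  by move=> x _; rewrite Az_q0 mulmx0 mxE.
by rewrite Az_q0 mulmx0 mxE.
Qed.

Definition i0 : 'I_3 := @Ordinal 3 0 isT.
Definition i1 : 'I_3 := @Ordinal 3 1 isT.
Definition i2 : 'I_3 := @Ordinal 3 2 isT.

Lemma ord3P (P : 'I_3 -> Prop) : P i0 -> P i1 -> P i2 -> forall i, P i.
Proof.
move=> P0 P1 P2 [[|[|[|//]]] i_lt3].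
- by rewrite (_ : Ordinal i_lt3 = i0) //; apply: val_inj.
- by rewrite (_ : Ordinal i_lt3 = i1) //; apply: val_inj.
- by rewrite (_ : Ordinal i_lt3 = i2) //; apply: val_inj.
Qed.

Definition col3 (R : nmodType) (y0 y1 y2 : R) : 'cV[R]_3 :=
  \col_(i < 3) [:: y0; y1; y2]`_i.

Lemma col3E (R : nmodType) (y0 y1 y2 : R) :
  [/\ col3 y0 y1 y2 i0 0 = y0, col3 y0 y1 y2 i1 0 = y1
     & col3 y0 y1 y2 i2 0 = y2].
Proof. by rewrite !mxE. Qed.

Section UpperTriangularMatrix3.
Variable R : realType.
Variable A : 'M[R]_3.
Hypothesis A_ut : forall i j : 'I_3, (j < i)%N -> A i j = 0.

Local Notation a := (A i0 i0).
Local Notation p := (A i0 i1).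
Local Notation q := (A i0 i2).
Local Notation b := (A i1 i1).
Local Notation r := (A i1 i2).
Local Notation c := (A i2 i2).

Lemma mulmx_ut3 (v : 'cV[R]_3) :
  [/\ (A *m v) i0 0 = row0 a p q (v i0 0) (v i1 0) (v i2 0),
      (A *m v) i1 0 = row1 b r (v i1 0) (v i2 0)
    & (A *m v) i2 0 = row2 c (v i2 0)].
Proof.
have entry i : (A *m v) i 0 = A i i0 * v i0 0 + A i i1 * v i1 0 + A i i2 * v i2 0.
  rewrite mxE !big_ord_recr big_ord0 /= add0r.
  by congr (_ + _ + _); congr (A i _ * v _ 0); apply: val_inj.
rewrite /row0 /row1 /row2 !entry (@A_ut i1 i0) ?(@A_ut i2 i0) ?(@A_ut i2 i1) //.
by split; ring.
Qed.

Lemma ut3_range_kernel_cone :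
  (forall z, in_range A z -> vnonneg z -> A *m z = 0 -> z = 0) ->
  forall y0 y1 y2 z0 z1 z2 : R,
  z0 = row0 a p q y0 y1 y2 -> z1 = row1 b r y1 y2 -> z2 = row2 c y2 ->
  0 <= z0 -> 0 <= z1 -> 0 <= z2 ->
  row0 a p q z0 z1 z2 = 0 -> row1 b r z1 z2 = 0 -> row2 c z2 = 0 ->
  [/\ z0 = 0, z1 = 0 & z2 = 0].
Proof.
move=> range_kernel y0 y1 y2 z0 z1 z2 e0 e1 e2 z0_ge0 z1_ge0 z2_ge0 Az0 Az1 Az2.
have [y_0 y_1 y_2] := col3E y0 y1 y2.
have [Ay0 Ay1 Ay2] := mulmx_ut3 (col3 y0 y1 y2).
rewrite y_0 y_1 y_2 -e0 -e1 -e2 in Ay0 Ay1 Ay2.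
have [AAy0 AAy1 AAy2] := mulmx_ut3 (A *m col3 y0 y1 y2).
rewrite Ay0 Ay1 Ay2 Az0 Az1 Az2 in AAy0 AAy1 AAy2.
have Ay_0 : A *m col3 y0 y1 y2 = 0.
  apply: range_kernel.
  - by exists (col3 y0 y1 y2).
  - by move=> i; move: i; apply: ord3P; [rewrite Ay0 | rewrite Ay1 | rewrite Ay2].
  - apply/matrixP => i j; rewrite ord1 [RHS]mxE; move: i.
    by apply: ord3P; [rewrite AAy0 | rewrite AAy1 | rewrite AAy2].
by rewrite -Ay0 -Ay1 -Ay2 Ay_0 !mxE.
Qed.

Lemma ut3_range_monotone : Zmatrix A -> (forall i, 0 <= A i i) ->
  (forall z, in_range A z -> vnonneg z -> A *m z = 0 -> z = 0) ->
  range_monotone A.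
Proof.
move=> A_Z A_diag range_kernel x AAy_ge0 [y Exy]; subst x.
have cone := ut3_range_kernel_cone range_kernel.
have [Ay0 Ay1 Ay2] := mulmx_ut3 y.
have [AAy0 AAy1 AAy2] := mulmx_ut3 (A *m y).
rewrite Ay0 Ay1 Ay2 in AAy0 AAy1 AAy2.
have := AAy_ge0 i0; have := AAy_ge0 i1; have := AAy_ge0 i2.
rewrite AAy0 AAy1 AAy2 => Az2_ge0 Az1_ge0 Az0_ge0.
have [] := upper_triangular3_range_monotone (A_diag i0) (A_diag i1) (A_diag i2)
  (A_Z i0 i1 isT) (A_Z i0 i2 isT) (A_Z i1 i2 isT) cone
  Az0_ge0 Az1_ge0 Az2_ge0.
by rewrite -Ay0 -Ay1 -Ay2 => ? ? ?; apply: ord3P.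
Qed.

End UpperTriangularMatrix3.

Theorem mainTheorem9 (R : realType) (A : 'M[R]_3) :
  (forall i j : 'I_3, (j < i)%N -> A i j = 0) ->
  Zmatrix A ->
  (forall i : 'I_3, 0 <= A i i) ->
  Karamardian A ->
  range_monotone A.
Proof.
move=> A_ut A_Z A_diag A_kar.
exact: ut3_range_monotone A_ut A_Z A_diag (karamardian_range_kernel A_kar).
Qed.
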